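(* For any constant $\delta\in(0,1)$ there exists an infinite family of graphs $\{G_n\}$ such that $G_n$ has $n$ nodes and contains a clique of size $\delta n$, but for all $\epsilon<\min\left\{\frac{1-\delta}{1+\delta},\frac19\right\}$ and for sufficiently large $n$, the shingles algorithm cannot find an $\epsilon$-near clique with at least $(1-\epsilon)\delta n$ nodes in $G_n$ (i.e., whatever the random IDs drawn, no candidate set it can output is an $\epsilon$-near clique with at least $(1-\epsilon)\delta n$ nodes).
   Context: Each undirected edge $\{u,v\}$ is counted as two directed edges. For $0\le\epsilon\le1$, a set $D$ of nodes of a graph $(V,E)$ is an $\epsilon$-near clique if $|\{(u,v)\in D\times D : \{u,v\}\in E\}|\ge(1-\epsilon)|D|(|D|-1)$. The shingles algorithm (a distributed algorithm): each node picks a random ID from a space large enough that collisions are negligible and sends it to all neighbors; each node then takes as its label the smallest ID among itself and its neighbors; nodes with the same label form a candidate set; each candidate set computes its density by having every member send its degree within the set to the set's leader (the node whose ID is the label), and only sets of sufficient size and density survive; conflicts between overlapping candidate sets are resolved in favor of the larger set, and for equal sizes in favor of the smaller label. The output near-cliques are the surviving candidate sets. *)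

From HB Require Import structures.
From mathcomp Require Import all_boot all_order all_algebra.
From mathcomp Require Import reals.
Set Implicit Arguments. Unset Strict Implicit. Unset Printing Implicit Defensive.
Import Order.TTheory GRing.Theory Num.Theory.
Local Open Scope ring_scope.

Definition simple_graph (T : finType) (e : rel T) : Prop :=
  symmetric e /\ irreflexive e.

Definition is_clique (T : finType) (e : rel T) (K : {set T}) : Prop :=
  forall x y, x \in K -> y \in K -> x != y -> e x y.

(* Number of directed edges inside D (each undirected edge counted twice). *)
Definition dir_edges_in (T : finType) (e : rel T) (D : {set T}) : nat :=
  #|[set p : T * T | [&& p.1 \in D, p.2 \in D & e p.1 p.2]]|.

Definition near_clique (R : realType) (T : finType) (e : rel T) (eps : R)
    (D : {set T}) : Prop :=
  (1 - eps) * (#|D|%:R) * (#|D|%:R - 1) <= (dir_edges_in e D)%:R.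

(* Shingles: label of v = the node of its closed neighbourhood with the
   smallest (random, pairwise distinct) ID. *)
Definition shingle_label (T : finType) (e : rel T) (id : T -> nat) (v : T) : T :=
  [arg min_(u < v | (u == v) || e v u) id u].

Definition candidate_set (T : finType) (e : rel T) (id : T -> nat) (u : T)
    : {set T} :=
  [set v | shingle_label e id v == u].

(* Split a clique of about delta n vertices into two halves ("cores") and give each
   half a "fringe" of n/2 - |core| vertices adjacent exactly to that half. Core
   vertices of one side have the same closed neighbourhood, so a candidate set
   that is not tiny is a whole side, or a whole side plus the other core. A whole
   side has n/2 vertices, which reaches (1 - eps) delta n only if delta < 9/16; its
   fringe, then of about 7/16 of the side, is independent, so more than a 1/9
   fraction of its pairs are missing. A side plus the other core misses the pairs
   between its fringe and the rest, about a (1 - delta)/(1 + delta) fraction. *)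
From HB Require Import structures.
From mathcomp Require Import all_boot all_order all_algebra.
From mathcomp Require Import reals zify ring lra.
Set Implicit Arguments. Unset Strict Implicit. Unset Printing Implicit Defensive.
Import Order.TTheory GRing.Theory Num.Theory.

Section CandidateSets.
Variables (T : finType) (e : rel T) (id : T -> nat).
Hypothesis id_inj : injective id.

Definition closed_nbhd (v : T) : pred T := fun w => (w == v) || e v w.

Lemma candidate_setP u v : v \in candidate_set e id u <->
  closed_nbhd v u /\ forall w, closed_nbhd v w -> (id u <= id w)%N.
Proof.
rewrite inE /shingle_label.
have vv : closed_nbhd v v by rewrite /closed_nbhd eqxx.
case: (@arg_minnP T v (closed_nbhd v) id vv) => l vl l_min; split=> [/eqP <- //|].
move=> [vu u_min]; apply/eqP/id_inj/eqP; rewrite eqn_leq.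
by rewrite l_min // u_min.
Qed.

End CandidateSets.

Lemma dir_edges_in_sum (T : finType) (e : rel T) (D : {set T}) :
  dir_edges_in e D = (\sum_(x in D) #|[set y in D | e x y]|)%N.
Proof.
rewrite /dir_edges_in -sum1_card; symmetry.
under eq_bigr do rewrite -sum1_card.
by rewrite pair_big_dep; apply: eq_bigl => -[x y]; rewrite !inE.
Qed.

Section TwoSidedGraph.
Variables (T : finType) (core side : T -> bool).

Definition two_sided_graph : rel T := fun x y =>
  (x != y) && ((core x && core y) || ((side x == side y) && (core x || core y))).

Local Notation G := two_sided_graph.

Lemma two_sided_graph_sym : symmetric G.
Proof.
move=> x y; rewrite /G eq_sym; congr (_ && _).
by case: (core x); case: (core y); case: (side x); case: (side y).
Qed.

Lemma two_sided_graph_irr : irreflexive G.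
Proof. by move=> x; rewrite /G eqxx. Qed.

Definition core_part s := [set x | core x && (side x == s)].
Definition fringe_part s := [set x | ~~ core x && (side x == s)].

Lemma closed_nbhd_core v w : core v ->
  closed_nbhd G v w = core w || (side w == side v).
Proof.
move=> cv; rewrite /closed_nbhd /G (eq_sym v w).
case: (eqVneq w v) => [->|_] /=; first by rewrite cv eqxx orbT.
by rewrite cv /= andbT; case: (core w); case: (side w); case: (side v).
Qed.

Lemma closed_nbhd_fringe v w : ~~ core v ->
  closed_nbhd G v w = (w == v) || (core w && (side w == side v)).
Proof.
move=> cv; rewrite /closed_nbhd /G (eq_sym v w).
case: (eqVneq w v) => [->|_] //=.
by rewrite (negbTE cv) /=; case: (core w); case: (side w); case: (side v).
Qed.

Section Candidate.
Variables (id : T -> nat) (u : T).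
Hypothesis id_inj : injective id.
Local Notation C := (candidate_set G id u).

Lemma candidate_sub_side :
  C \subset [set v | core v || (side v == side u)].
Proof.
apply/subsetP=> v /(candidate_setP _ id_inj) [vu _]; rewrite inE; move: vu.
rewrite /closed_nbhd /G; case: eqP => [<-|_] /=; first by rewrite eqxx orbT.
by case/andP=> _; case: (core v); case: (core u); case: (side v); case: (side u).
Qed.

Lemma candidate_fringe_leader : ~~ core u -> C \subset u |: core_part (side u).
Proof.
move=> cu; apply/subsetP=> v /(candidate_setP _ id_inj) [vu _]; rewrite !inE.
move: vu; rewrite /closed_nbhd /G; case: eqP => [->|_]; first by rewrite eqxx.
case/andP=> _; rewrite (negbTE cu).
by case: (core v); case: (side v); case: (side u); rewrite //= orbT.
Qed.

(* Core vertices of one side share their closed neighbourhood, hence their label. *)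
Lemma candidate_core_part v : core u -> v \in C -> core v ->
  core_part (side v) \subset C.
Proof.
move=> cu /(candidate_setP _ id_inj) [_ u_min] cv; apply/subsetP=> w.
rewrite inE => /andP[cw /eqP sw]; apply/(candidate_setP _ id_inj).
rewrite closed_nbhd_core // cu; split=> // z; rewrite closed_nbhd_core // sw => zw.
by apply: u_min; rewrite closed_nbhd_core.
Qed.

Lemma candidate_fringe_part v : core u -> v \in C -> core v ->
  side v = side u -> fringe_part (side u) \subset C.
Proof.
move=> cu /(candidate_setP _ id_inj) [_ u_min] cv sv; apply/subsetP=> w.
rewrite inE => /andP[cw /eqP sw]; apply/(candidate_setP _ id_inj).
rewrite closed_nbhd_fringe // cu sw eqxx orbT; split=> // z.
rewrite closed_nbhd_fringe //; case/orP=> [/eqP->|/andP[cz sz]]; apply: u_min.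
  by rewrite closed_nbhd_core // sw sv eqxx orbT.
by rewrite closed_nbhd_core // cz.
Qed.

End Candidate.
End TwoSidedGraph.

Section EdgeCount.
Variables (T : finType) (core side : T -> bool) (s : bool) (D : {set T}).
Hypothesis D_side : D \subset [set v | core v || (side v == s)].
Local Notation G := (two_sided_graph core side).
Local Notation a := #|D :&: core_part core side s|.
Local Notation b := #|D :&: core_part core side (~~ s)|.
Local Notation c := #|D :&: fringe_part core side s|.

Lemma setD_core_part :
  (D :\: core_part core side s) :&: core_part core side (~~ s) =
  D :&: core_part core side (~~ s).
Proof.
apply/setP=> x; rewrite !inE; case Dx: (x \in D); rewrite ?andbF //=.
have := subsetP D_side x Dx; rewrite inE.
by case: (core x); case: (side x); case: s.
Qed.

Lemma setD_core_parts :
  (D :\: core_part core side s) :\: core_part core side (~~ s) =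
  D :&: fringe_part core side s.
Proof.
apply/setP=> x; rewrite !inE; case Dx: (x \in D); rewrite ?andbF //=.
have := subsetP D_side x Dx; rewrite inE.
by case: (core x); case: (side x); case: s.
Qed.

Lemma card_side_partition : #|D| = (a + b + c)%N.
Proof.
rewrite -(cardsID (core_part core side s) D).
rewrite -(cardsID (core_part core side (~~ s)) (D :\: _)).
by rewrite setD_core_part setD_core_parts addnA.
Qed.

(* A vertex of the other core only sees core vertices, a fringe vertex only the
   core of its own side. *)
Definition closed_degree_bound x :=
  if x \in core_part core side s then #|D|
  else if x \in core_part core side (~~ s) then (a + b)%N else a.+1.

Lemma closed_degree_le x : x \in D ->
  (#|[set y in D | G x y]| + 1 <= closed_degree_bound x)%N.
Proof.
move=> Dx; set N := [set y in D | G x y].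
have xN : x \notin N by rewrite inE two_sided_graph_irr andbF.
have -> : (#|N| + 1 = #|x |: N|)%N by rewrite cardsU1 xN addnC.
rewrite /closed_degree_bound; case: ifP => x_s.
  apply: subset_leq_card; apply/subsetP=> y; rewrite !inE.
  by case/orP=> [/eqP->|/andP[]].
case: ifP => x_ns.
  rewrite -cardsUI; apply: leq_trans (leq_addr _ _); apply: subset_leq_card.
  apply/subsetP=> y; rewrite !inE; case/orP=> [/eqP->|/andP[Dy xy]].
    by move: x_ns; rewrite inE Dx => ->; rewrite orbT.
  rewrite Dy /=; move: x_ns xy; have := subsetP D_side y Dy.
  rewrite !inE /two_sided_graph.
  by case: (core x); case: (side x); case: (core y); case: (side y); case: s;
    rewrite ?andbF ?andbT ?orbF ?orbT.
rewrite cardsU1 xN add1n ltnS; apply: subset_leq_card.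
apply/subsetP=> y; rewrite !inE => /andP[Dy xy]; rewrite Dy /=.
move: x_s x_ns xy; have := subsetP D_side x Dx; rewrite !inE /two_sided_graph.
by case: (core x); case: (side x); case: (core y); case: (side y); case: s;
  rewrite ?andbF ?andbT ?orbF ?orbT.
Qed.

Lemma dir_edges_in_two_sided :
  (dir_edges_in G D + #|D| <= a * #|D| + b * (a + b) + c * a.+1)%N.
Proof.
rewrite dir_edges_in_sum -sum1_card -big_split /=.
apply: (@leq_trans (\sum_(x in D) closed_degree_bound x)).
  by apply: leq_sum => x; exact: closed_degree_le.
rewrite (big_setID (core_part core side s)).
rewrite (big_setID (A := D :\: _) (core_part core side (~~ s))) /=.
rewrite setD_core_part setD_core_parts.
rewrite (eq_bigr (fun _ => #|D|)); last first.
  by move=> x; rewrite inE /closed_degree_bound => /andP[_ ->].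
rewrite (eq_bigr (fun _ => (a + b)%N)
  (P := fun x => x \in D :&: core_part core side (~~ s))); last first.
  move=> x; rewrite !inE /closed_degree_bound => /andP[_ xs]; rewrite !inE xs.
  by move: xs; case: (core x); case: (side x); case: s.
rewrite (eq_bigr (fun _ => a.+1) (P := fun x => x \in D :&: fringe_part core side s)).
  by rewrite !sum_nat_const muln1 addnA.
move=> x; rewrite !inE /closed_degree_bound => /andP[_ xs]; rewrite !inE.
by move: xs; case: (core x); case: (side x); case: s.
Qed.

End EdgeCount.

Section Balanced.
Variables (T : finType) (core side : T -> bool) (h m : nat).
Hypothesis card_core_part : forall s, #|core_part core side s| = h.
Hypothesis card_fringe_part : forall s, #|fringe_part core side s| = m.
Variables (id : T -> nat) (u : T).
Hypothesis id_inj : injective id.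
Local Notation C := (candidate_set (two_sided_graph core side) id u).
Local Notation E := (dir_edges_in (two_sided_graph core side) C).

(* Either the leader is a fringe vertex; or no core vertex of the leader's side
   joined, so all edges lie in the other core; or C is the whole side of the
   leader; or C is that side together with the other core. *)
Lemma candidate_set_cases :
  [\/ (#|C| <= h.+1)%N,
      exists2 b, (b <= h)%N & (E + b <= b * b)%N,
      #|C| = (h + m)%N /\ (E + #|C| <= h * #|C| + m * h.+1)%N |
      #|C| = (h + h + m)%N /\ (E + #|C| <= h * #|C| + h * (h + h) + m * h.+1)%N].
Proof.
have [cu|cu] := boolP (core u); last first.
  apply: Or41; have := subset_leq_card (candidate_fringe_leader side id_inj cu).
  rewrite cardsU1 card_core_part addnC => /leq_trans; apply.
  by rewrite -addn1 leq_add2l leq_b1.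
have C_side := candidate_sub_side core side u id_inj.
have := dir_edges_in_two_sided C_side; have := card_side_partition C_side.
set a := #|C :&: _|; set b := #|C :&: _|; set c := #|C :&: _| => cardC edges.
have bh : (b <= h)%N.
  by rewrite -(card_core_part (~~ side u)); apply/subset_leq_card/subsetIr.
have [a0|] := posnP a.
  apply: Or42; exists b => //; move: edges; rewrite cardC a0; nia.
rewrite card_gt0 => /set0Pn[v]; rewrite in_setI => /andP[vC].
rewrite inE => /andP[cv /eqP sv].
have ah : a = h.
  by rewrite /a -sv (setIidPr (candidate_core_part id_inj cu vC cv)) card_core_part.
have cm : c = m.
  by rewrite /c (setIidPr (candidate_fringe_part id_inj cu vC cv sv)) card_fringe_part.
have [b0|] := posnP b.
  apply: Or43; rewrite cardC ah cm b0 addn0; split=> //.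
  by move: edges; rewrite cardC ah cm b0; nia.
rewrite card_gt0 => /set0Pn[w]; rewrite in_setI => /andP[wC].
rewrite inE => /andP[cw /eqP sw].
have bh' : b = h.
  by rewrite /b -sw (setIidPr (candidate_core_part id_inj cu wC cw)) card_core_part.
apply: Or44; rewrite cardC ah cm bh'; split=> //.
by move: edges; rewrite cardC ah cm bh'; nia.
Qed.

End Balanced.

Lemma sum_nat_range lo hi n :
  (\sum_(0 <= i < n) ((lo <= i) && (i < hi) : nat) = minn n hi - lo)%N.
Proof.
elim: n => [|n IH]; first by rewrite big_nil min0n.
by rewrite big_nat_recr //= IH; case: (leqP lo n); case: (ltnP n hi) => /=; lia.
Qed.

Lemma card_ord_range n (P : pred 'I_n) lo hi :
  (forall i : 'I_n, P i = (lo <= i < hi)%N) ->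
  #|[set x | P x]| = (minn n hi - lo)%N.
Proof.
move=> P_range; rewrite -sum1_card big_mkcond /= -sum_nat_range big_mkord.
by apply: eq_bigr => i _; rewrite inE P_range.
Qed.

Local Open Scope ring_scope.

Section SizeDensity.
Variables (R : realFieldType) (delta eps P H M S E : R).

Lemma large_candidate_ge :
  eps < 1 / 9 -> 0 < delta * P ->
  (1 - eps) * delta * (2 * P) <= S -> 16 / 9 * (delta * P) <= S.
Proof.
move=> eps_lt dP_gt0 S_large.
have : eps * (delta * P) <= 1 / 9 * (delta * P) by apply: ler_wpM2r; lra.
move: S_large.
have -> : (1 - eps) * delta * (2 * P) = 2 * (delta * P) - 2 * (eps * (delta * P)).
  by ring.
lra.
Qed.

Lemma large_candidate_gt_core :
  eps < 1 / 9 -> 3 < delta * P -> H <= delta * P + 1 ->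
  (1 - eps) * delta * (2 * P) <= S -> H + 1 < S.
Proof.
move=> eps_lt dP_gt3 H_le S_large.
have := large_candidate_ge eps_lt _ S_large; lra.
Qed.

Lemma large_candidate_not_sparse B :
  0 <= eps -> eps < 1 / 9 -> 3 < delta * P -> H <= delta * P + 1 ->
  (1 - eps) * delta * (2 * P) <= S -> (1 - eps) * S * (S - 1) <= E ->
  0 <= B -> B <= H -> E <= B * B - B -> False.
Proof.
move=> eps_ge0 eps_lt dP_gt3 H_le S_large S_dense B_ge0 B_le E_le.
have := large_candidate_ge eps_lt _ S_large.
move: (delta * P) dP_gt3 H_le => x x_gt3 H_le' S_ge.
have : B * B - B <= (x + 1) * x by nra.
have : 16 / 9 * x * (16 / 9 * x - 1) <= S * (S - 1) by nra.
have : 8 / 9 * (S * (S - 1)) <= (1 - eps) * S * (S - 1) by nra.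
nra.
Qed.

(* A whole side is large only if delta <= 9/16; its fringe, an independent set,
   then has about 7P/16 vertices. *)
Lemma large_candidate_not_one_side :
  0 <= eps -> eps < 1 / 9 -> 3 < delta * P -> H <= delta * P + 1 ->
  H + M = P -> 16 <= P ->
  (1 - eps) * delta * (2 * P) <= P -> (1 - eps) * P * (P - 1) <= E ->
  E <= H * P + M * H + M - P -> False.
Proof.
move=> eps_ge0 eps_lt dP_gt3 H_le HMP P_ge16 P_large P_dense E_le.
have delta_le : delta <= 9 / 16.
  have : (2 * (1 - eps) * delta - 1) * P <= 0 by nra.
  nra.
have M_ge : 7 / 16 * P - 1 <= M by nra.
have fringe_sparse : M * M - M <= eps * (P * P - P).
  have -> : M * M - M = P * P - P - (H * P + M * H + M - P) by rewrite -HMP; ring.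
  nra.
have : eps * (P * P - P) <= 1 / 9 * (P * P - P) by nra.
have : (7 / 16 * P - 1) * (7 / 16 * P - 2) <= M * M - M by nra.
nra.
Qed.

Lemma large_candidate_not_two_sides :
  H <= delta * P + 1 -> H + M = P -> 0 <= H -> 1 < P ->
  2 < P * (1 - delta - eps * (1 + delta)) ->
  (1 - eps) * (P + H) * (P + H - 1) <= E ->
  E <= (P + H) * (P + H - 1) - M * (P + H - 1) -> False.
Proof.
move=> H_le HMP H_ge0 P_gt1 P_large S_dense E_le.
have : (M - eps * (P + H)) * (P + H - 1) <= 0 by nra.
have : M <= eps * (P + H) by nra.
nra.
Qed.

End SizeDensity.

Section Family.
Variables (R : realType) (delta : R).
Hypotheses (delta_gt0 : 0 < delta) (delta_lt1 : delta < 1).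

Definition core_size p := minn p (Num.truncn (delta * p%:R)).+1.

Lemma core_size_le p : (core_size p <= p)%N.
Proof. exact: geq_minl. Qed.

Lemma core_size_gt p : (0 < p)%N -> delta * p%:R < (core_size p)%:R.
Proof.
move=> p_gt0; rewrite /core_size /minn; case: ifP => _; last exact: truncnS_gt.
have : 0 < p%:R :> R by rewrite ltr0n.
by have := delta_lt1; nra.
Qed.

Lemma core_size_le_succ p : (core_size p)%:R <= delta * p%:R + 1.
Proof.
apply: le_trans (_ : ((Num.truncn (delta * p%:R)).+1)%:R <= _).
  by rewrite ler_nat geq_minr.
by rewrite -natr1 lerD2r truncn_le mulr_ge0 // ltW.
Qed.

Section Graph.
Variable n : nat.
Local Notation p := n./2.
Local Notation h := (core_size p).

Definition family_side (x : 'I_n) := (x < p)%N.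
Definition family_core (x : 'I_n) := (x < h)%N || (p <= x < p + h)%N.
Definition family_graph := two_sided_graph family_core family_side.

Hypothesis n_even : ~~ odd n.

Lemma half_even : n = (p + p)%N.
Proof. by rewrite addnn -[LHS]odd_double_half (negbTE n_even). Qed.

Lemma card_family_core_part s :
  #|core_part family_core family_side s| = h.
Proof.
have := half_even; have := core_size_le p; case: s => ? ?.
  rewrite (@card_ord_range n _ 0 h); first lia.
  by move=> i; rewrite /family_core /family_side; lia.
rewrite (@card_ord_range n _ p (p + h)); first lia.
by move=> i; rewrite /family_core /family_side; lia.
Qed.

Lemma card_family_fringe_part s :
  #|fringe_part family_core family_side s| = (p - h)%N.
Proof.
have := half_even; have := core_size_le p; case: s => ? ?.
  rewrite (@card_ord_range n _ h p); first lia.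
  by move=> i; rewrite /family_core /family_side; lia.
rewrite (@card_ord_range n _ (p + h) n); first lia.
by move=> i; have := ltn_ord i; rewrite /family_core /family_side; lia.
Qed.

Lemma family_clique : is_clique family_graph [set x | family_core x].
Proof. by move=> x y; rewrite !inE /family_graph /two_sided_graph => -> -> ->. Qed.

Lemma card_family_clique : delta * n%:R <= #|[set x | family_core x]|%:R.
Proof.
have -> : #|[set x | family_core x]| = (h + h)%N.
  rewrite -(cardsID [set x | family_side x]) -{1}(card_family_core_part true).
  rewrite -(card_family_core_part false); congr (_ + _)%N; apply: eq_card => x.
    by rewrite !inE; case: (family_side x); case: (family_core x).
  by rewrite !inE; case: (family_side x); case: (family_core x).
have -> : n%:R = p%:R + p%:R :> R by rewrite -natrD -half_even.
have [p0|p_gt0] := posnP p; first by rewrite p0 addr0 mulr0 ler0n.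
rewrite natrD; by have := core_size_gt p_gt0; lra.
Qed.

Lemma family_no_large_near_clique (eps : R) (id : 'I_n -> nat) (u : 'I_n) :
  injective id -> 0 <= eps -> eps < 1 / 9 -> 3 < delta * p%:R -> 16 <= p%:R :> R ->
  2 < p%:R * (1 - delta - eps * (1 + delta)) ->
  ~ (near_clique family_graph eps (candidate_set family_graph id u) /\
     (1 - eps) * delta * n%:R <= #|candidate_set family_graph id u|%:R).
Proof.
move=> id_inj eps_ge0 eps_lt dP_gt3 P_ge16 P_large [].
rewrite /near_clique; set C := candidate_set _ id u; set E := dir_edges_in _ C.
have -> : n%:R = 2 * p%:R :> R by rewrite {1}half_even natrD; ring.
move=> C_dense C_large.
have p_gt0 : (0 < p)%N by rewrite -(ltr_nat R); lra.
have H_le := core_size_le_succ p.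
have HMP : (h + (p - h))%N = p by rewrite subnKC ?core_size_le.
have HMP_R : h%:R + (p - h)%:R = p%:R :> R by rewrite -natrD HMP.
have := candidate_set_cases card_family_core_part card_family_fringe_part u id_inj.
rewrite -/family_graph -/C -/E; case.
- rewrite -(ler_nat R) -natr1.
  have := large_candidate_gt_core eps_lt dP_gt3 H_le C_large; lra.
- case=> b b_le; rewrite -(ler_nat R) natrD natrM => E_le.
  apply: (large_candidate_not_sparse eps_ge0 eps_lt dP_gt3 H_le C_large C_dense
    (ler0n _ b)); first by rewrite ler_nat.
  lra.
- rewrite HMP => -[cardC]; rewrite cardC -(ler_nat R) !natrD !natrM -natr1 => E_le.
  rewrite cardC in C_large C_dense.
  apply: (large_candidate_not_one_side eps_ge0 eps_lt dP_gt3 H_le HMP_R P_ge16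
    C_large C_dense); lra.
- rewrite addnAC HMP => -[cardC]; rewrite cardC -(ler_nat R) !natrD !natrM -natr1 => E_le.
  rewrite cardC natrD in C_dense.
  apply: (large_candidate_not_two_sides H_le HMP_R (ler0n _ _) _ P_large C_dense).
    lra.
  move: E_le; rewrite -HMP_R; nra.
Qed.

End Graph.
End Family.

Unset Implicit Arguments.

Theorem claim3p1 (R : realType) (delta : R) :
  0 < delta < 1 ->
  exists (S : pred nat) (G : forall n : nat, rel 'I_n),
    (forall m : nat, exists n : nat, (m <= n)%N /\ S n) /\
    (forall n : nat, S n ->
       simple_graph (G n) /\
       exists K : {set 'I_n}, is_clique (G n) K /\ delta * n%:R <= (#|K|)%:R) /\
    (forall eps : R,
       0 <= eps -> eps < Num.min ((1 - delta) / (1 + delta)) (1 / 9) ->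
       exists N : nat, forall n : nat, S n -> (N <= n)%N ->
         forall id : 'I_n -> nat, injective id ->
         forall u : 'I_n,
           ~ (near_clique (G n) eps (candidate_set (G n) id u) /\
              (1 - eps) * delta * n%:R <= (#|candidate_set (G n) id u|)%:R)).
Proof.
case/andP=> delta_gt0 delta_lt1.
exists (fun n => ~~ odd n), (family_graph delta); split; [|split].
- by move=> m; exists m.*2; rewrite odd_double -addnn leq_addr.
- move=> n n_even; split.
    by split; [exact: two_sided_graph_sym | exact: two_sided_graph_irr].
  exists [set x | family_core delta x].
  by split; [exact: family_clique | exact: card_family_clique].
move=> eps eps_ge0; rewrite lt_min => /andP[eps_lt_gap eps_lt].
have gap_gt0 : 0 < 1 - delta - eps * (1 + delta).
  move: eps_lt_gap; rewrite ltr_pdivlMr; [move=> ?; lra | lra].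
set gap := 1 - delta - eps * (1 + delta) in gap_gt0 *.
pose N := (Num.truncn (3 / delta + 2 / gap + 16)).+1.
exists (2 * N)%N => n n_even n_ge id id_inj u.
have p_gt : 3 / delta + 2 / gap + 16 < (n./2)%:R.
  apply: lt_le_trans (truncnS_gt _) _; rewrite ler_nat.
  move: n_ge; rewrite /N; move: (Num.truncn _) => t.
  by have := half_even n_even; lia.
have pos_3_delta : 0 < 3 / delta by rewrite divr_gt0.
have pos_2_gap : 0 < 2 / gap by rewrite divr_gt0.
apply: family_no_large_near_clique => //.
- by rewrite mulrC -ltr_pdivrMr //; lra.
- by lra.
- by rewrite -ltr_pdivrMr //; lra.
Qed.
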